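(* Let $X,Y$ be a section-pair with $m$ chords, and suppose that each vertex of $X$ is incident to at most one chord. Then either there is a family of $m/2$ pairwise-interlacing chords, or there are pairs of distinct chords $(e_i,e'_i)$, $e_i=(x_i,y_i)$, $e'_i=(x'_i,y'_i)$ (with $x_i,x'_i\in X$, $y_i,y'_i\in Y$), $i=1,\dots,t$, such that: (1) for every $1\le i\le t$, $e_i,e'_i$ are either parallel or share their vertex in $Y$ (i.e. $y_i=y'_i$); (2) for every $1\le i<j\le t$, both $e_i$ and $e'_i$ interlace both $e_j$ and $e'_j$; (3) $\sum_{i=1}^t d_X(x_i,x'_i)\ge m/4$.
   Context: A section-pair in a graph $G$ is a pair $X,Y$ of vertex-disjoint paths; the two endpoints of $X$ are designated its top $x^{t}$ and bottom $x^{b}$, and those of $Y$ its top $y^t$ and bottom $y^b$. For distinct $x_1,x_2\in X$, $x_1$ is above $x_2$ if $x_1$ is closer to $x^t$ along $X$ than $x_2$, otherwise below; similarly in $Y$. A chord is an edge of $G$ with one endpoint in $X$ and one in $Y$. For $x_1,x_2\in X$, $d_X(x_1,x_2)$ is the number of edges of the subpath of $X$ between $x_1$ and $x_2$. Two chords $(x_1,y_1),(x_2,y_2)$ ($x_i\in X,y_i\in Y$) with no common vertex are parallel if for some $i\in\{1,2\}$, $x_i$ is above $x_{3-i}$ and $y_i$ is above $y_{3-i}$; otherwise they are interlacing. *)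

From mathcomp Require Import all_boot.
Set Implicit Arguments. Unset Strict Implicit. Unset Printing Implicit Defensive.

Section SectionPair.
Variable T : finType.
Variable e : rel T.

Definition simple_graph := symmetric e /\ irreflexive e.

(* A path of G given as the list of its vertices from top to bottom:
   nonempty, no repeated vertex, consecutive vertices adjacent.
   The top is the head of the list, the bottom its last element. *)
Definition is_gpath (s : seq T) : bool :=
  if s is x :: p then path e x p && uniq s else false.

Definition section_pair (X Y : seq T) : Prop :=
  [/\ is_gpath X, is_gpath Y & [disjoint X & Y]].

Variables X Y : seq T.

(* Chords, represented as pairs (x, y) with x in X, y in Y (each chord is
   represented exactly once since X and Y are disjoint). *)
Definition chords : {set T * T} :=
  [set c | [&& c.1 \in X, c.2 \in Y & e c.1 c.2]].

Definition aboveX (u v : T) : bool := index u X < index v X.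
Definition aboveY (u v : T) : bool := index u Y < index v Y.

(* d_X(x1,x2): number of edges of the subpath of X between x1 and x2. *)
Definition dX (x1 x2 : T) : nat :=
  (index x1 X - index x2 X) + (index x2 X - index x1 X).

Definition no_common_vertex (c1 c2 : T * T) : bool :=
  [&& c1.1 != c2.1, c1.1 != c2.2, c1.2 != c2.1 & c1.2 != c2.2].

Definition parallel (c1 c2 : T * T) : bool :=
  no_common_vertex c1 c2 &&
  ((aboveX c1.1 c2.1 && aboveY c1.2 c2.2) ||
   (aboveX c2.1 c1.1 && aboveY c2.2 c1.2)).

Definition interlacing (c1 c2 : T * T) : bool :=
  no_common_vertex c1 c2 && ~~ parallel c1 c2.

End SectionPair.

From mathcomp Require Import all_boot zify.
Set Implicit Arguments. Unset Strict Implicit. Unset Printing Implicit Defensive.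

(* Place each chord c at the point
   (posX c, posY c) of its positions along X and Y; two chords interlace
   exactly when one is strictly before the other along X and strictly after
   it along Y ("crossing").  Since a vertex of X carries at most one chord,
   posX is injective on chords.

   The core is a greedy decomposition, proved for an arbitrary finite set
   with two orders p, q (p injective): take a with p minimal, b with p
   maximal among the points weakly after a in q, and recurse on the points
   after b.  This yields a list of blocks (a, b) which pairwise entirely
   cross, block (a, b) accounting for at most p b - p a + 1 points.  Hence
   m <= |L| + s, where s sums the lengths of the blocks with a <> b.
   If m <= 2 |L|, the first ends of the blocks are m/2 pairwise interlacing
   chords; otherwise s > m/2, and the blocks with a <> b are the required
   pairs: their chords are parallel or share their Y-end, chords of
   different pairs cross, and their X-lengths add up to s >= m/4. *)

Lemma pairwise_mem2 (A : eqType) (r : rel A) (s : seq A) x y :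
  pairwise r s -> x \in s -> y \in s -> x != y -> r x y || r y x.
Proof.
move=> /(pairwiseP x) rs xs ys xy.
have ixy : index x s != index y s.
  by apply: contra xy => /eqP E; rewrite -(nth_index x xs) E nth_index.
have ins z : z \in s -> index z s \in gtn (size s) by rewrite inE index_mem.
have rel_at u v : u \in s -> v \in s -> index u s < index v s -> r u v.
  by move=> us vs; rewrite -{2}(nth_index x us) -{2}(nth_index x vs); apply: rs; exact: ins.
case: (ltngtP (index x s) (index y s)) ixy => // lt _.
  by rewrite rel_at.
by rewrite (rel_at y x) ?orbT.
Qed.

Lemma card_le_range (I : finType) (p : I -> nat) (D : {set I}) lo hi :
  {in D &, injective p} -> {in D, forall c, lo <= p c <= hi} ->
  #|D| <= (hi - lo).+1.
Proof.
move=> pinj prange.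
rewrite cardE -(size_map p) -(size_iota lo (hi - lo).+1).
apply: uniq_leq_size => [|k /mapP [c]].
  by rewrite map_inj_in_uniq ?enum_uniq // => u v; rewrite !mem_enum; apply: pinj.
by rewrite mem_enum => /prange + ->; rewrite mem_iota; lia.
Qed.

Section BlockDecomposition.
Variables (I : finType) (p q : I -> nat).

Definition cross (c d : I) : bool := (p c < p d) && (q d < q c).

Definition block (u : I * I) : bool := (p u.1 <= p u.2) && (q u.1 <= q u.2).

Definition blocks_cross (u v : I * I) : bool :=
  [&& cross u.1 v.1, cross u.1 v.2, cross u.2 v.1 & cross u.2 v.2].

(* One greedy step: take a with p minimal, then b with p maximal among the
   elements weakly after a in q.  Every element after b in p crosses both a
   and b, and the injectivity of p bounds the elements not after b by the
   length of the interval [p a, p b]. *)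
Lemma peel_block (S : {set I}) c0 :
  c0 \in S -> {in S &, injective p} ->
  exists2 u, [&& u.1 \in S, u.2 \in S & block u] &
    [/\ {in [set c in S | p u.2 < p c], forall c, cross u.1 c && cross u.2 c}
      & #|S| <= (p u.2 - p u.1).+1 + #|[set c in S | p u.2 < p c]|].
Proof.
move=> c0S pinj.
case: (arg_minnP p c0S) => a aS amin; rewrite -/(a \in S) in aS.
have aB : (a \in S) && (q a <= q a) by apply/andP.
case: (@arg_maxnP _ a (fun c => (c \in S) && (q a <= q c)) p aB) => b /andP[bS qab] bmax.
have pab : p a <= p b by exact: bmax.
exists (a, b); first by rewrite /= aS bS /block pab qab.
split=> [c | ] /=.
  rewrite inE => /andP[cS pbc].
  have qca : q c < q a.
    by rewrite ltnNge; apply: contraL pbc => qac; rewrite -leqNgt; apply: bmax; rewrite cS.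
  by rewrite /cross (leq_ltn_trans pab pbc) pbc qca (leq_trans qca qab).
have -> : [set c in S | p b < p c] = S :&: [set c | p b < p c].
  by apply/setP => c; rewrite !inE andbC.
rewrite -{1}(cardsID [set c | p b < p c] S) addnC leq_add2r.
apply: card_le_range => [u v | c]; rewrite !inE.
  by move=> /andP[_ uS] /andP[_ vS]; apply: pinj.
by rewrite -leqNgt => /andP[-> /amin ->].
Qed.

Lemma block_decomposition (S : {set I}) :
  {in S &, injective p} ->
  exists L : seq (I * I),
    [/\ all (fun u => [&& u.1 \in S, u.2 \in S & block u]) L,
        pairwise blocks_cross L
      & #|S| <= \sum_(u <- L) (p u.2 - p u.1).+1].
Proof.
elim: {S}_.+1 {-2}S (ltnSn #|S|) => // n IH S leSn pinj.
case: (set_0Vmem S) => [-> | [c0 c0S]].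
  by exists [::]; rewrite cards0.
have [[a b] /= /and3P[aS bS ab] [crossS' cardS]] := peel_block c0S pinj.
set S' := [set c in S | p b < p c] in crossS' cardS.
have subS' : S' \subset S by apply/subsetP => c; rewrite inE => /andP[].
have ltS' : #|S'| < n.
  suff : #|S'| < #|S| by lia.
  apply: proper_card; apply/properP; split => //.
  by exists a => //; rewrite inE aS /= -leqNgt; case/andP: ab.
have [L [LS' pL cardS']] := IH S' ltS' (sub_in2 (subsetP subS') pinj).
exists ((a, b) :: L); split.
- rewrite /= aS bS ab; apply: sub_all LS' => u /and3P[u1 u2 ->].
  by rewrite !(subsetP subS').
- rewrite pairwise_cons pL andbT; apply/allP => u /(allP LS') /and3P[u1 u2 _].
  case/andP: (crossS' _ u1); case/andP: (crossS' _ u2).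
  by rewrite /blocks_cross /= => -> -> -> ->.
- by rewrite big_cons /=; apply: leq_trans cardS _; rewrite leq_add2l.
Qed.

Lemma blocks_count (L : seq (I * I)) :
  \sum_(u <- L) (p u.2 - p u.1).+1 =
  size L + \sum_(u <- L | u.1 != u.2) (p u.2 - p u.1).
Proof.
rewrite (eq_bigr (fun u => 1 + (p u.2 - p u.1))) // big_split sum1_size /=; congr (_ + _).
rewrite (bigID (fun u => u.1 != u.2)) /= [X in _ + X]big1 ?addn0 // => u /negPn/eqP ->.
by rewrite subnn.
Qed.

End BlockDecomposition.

Section Chords.
Variables (T : finType) (e : rel T) (X Y : seq T).
Hypothesis disXY : [disjoint X & Y].

Definition posX (c : T * T) : nat := index c.1 X.
Definition posY (c : T * T) : nat := index c.2 Y.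

Lemma chordP c : c \in chords e X Y -> [/\ c.1 \in X, c.2 \in Y & e c.1 c.2].
Proof. by rewrite inE => /and3P. Qed.

Lemma chords_no_common_vertex c d :
  c \in chords e X Y -> d \in chords e X Y ->
  posX c != posX d -> posY c != posY d -> no_common_vertex c d.
Proof.
move=> /chordP[cX cY _] /chordP[dX dY _] pcd qcd.
have XnY u v : u \in X -> v \in Y -> u != v.
  by move=> uX vY; apply: contraTneq vY => <-; rewrite (disjointFr disXY uX).
apply/and4P; split.
- by apply: contra pcd => /eqP; rewrite /posX => ->.
- exact: XnY.
- by rewrite eq_sym XnY.
- by apply: contra qcd => /eqP; rewrite /posY => ->.
Qed.

Lemma cross_interlacing c d :
  c \in chords e X Y -> d \in chords e X Y -> cross posX posY c d ->
  interlacing X Y c d && interlacing X Y d c.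
Proof.
move=> cC dC /andP[pcd qdc].
have ne (m n : nat) : m < n -> m != n /\ n != m by move=> mn; split; lia.
have [[pne pne'] [qne qne']] := (ne _ _ pcd, ne _ _ qdc).
rewrite /interlacing /parallel !chords_no_common_vertex //=.
by rewrite /aboveX /aboveY -!/(posX _) -!/(posY _); lia.
Qed.

Lemma block_parallel c d :
  c \in chords e X Y -> d \in chords e X Y ->
  posX c < posX d -> posY c <= posY d -> parallel X Y c d || (c.2 == d.2).
Proof.
move=> cC dC pcd; rewrite leq_eqVlt => /orP[/eqP qcd | qcd].
  have [[_ cY _] [_ dY _]] := (chordP cC, chordP dC).
  by rewrite (index_inj c.2 cY dY qcd) eqxx orbT.
rewrite /parallel chords_no_common_vertex //; try lia.
by rewrite /aboveX /aboveY -!/(posX _) -!/(posY _) pcd qcd.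
Qed.

Lemma crossing_chain_interlacing (A : seq (T * T)) :
  {subset A <= chords e X Y} -> pairwise (cross posX posY) A ->
  {in [set c in A] &, forall c1 c2, c1 != c2 -> interlacing X Y c1 c2}.
Proof.
move=> AC pA c1 c2; rewrite !inE => c1A c2A ne.
have [c1C c2C] := (AC _ c1A, AC _ c2A).
case/orP: (pairwise_mem2 pA c1A c2A ne).
  by move/(cross_interlacing c1C c2C) => /andP[].
by move/(cross_interlacing c2C c1C) => /andP[].
Qed.

Lemma crossing_blocks_interlacing u v :
  [/\ u.1 \in chords e X Y, u.2 \in chords e X Y, v.1 \in chords e X Y
    & v.2 \in chords e X Y] ->
  blocks_cross posX posY u v ->
  [/\ interlacing X Y u.1 v.1, interlacing X Y u.1 v.2,
      interlacing X Y u.2 v.1 & interlacing X Y u.2 v.2].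
Proof.
case=> u1 u2 v1 v2 /and4P[c11 c12 c21 c22].
have inter c d : c \in chords e X Y -> d \in chords e X Y ->
    cross posX posY c d -> interlacing X Y c d.
  by move=> cC dC /(cross_interlacing cC dC) /andP[].
by split; apply: inter.
Qed.

Lemma posX_inj :
  (forall x, x \in X -> #|[set c in chords e X Y | c.1 == x]| <= 1) ->
  {in chords e X Y &, injective posX}.
Proof.
move=> atmost1 c d cC dC pcd.
have [[cX _ _] [dX _ _]] := (chordP cC, chordP dC).
have E : c.1 = d.1 by apply: (index_inj c.1 cX dX).
by apply/(card_le1_eqP (atmost1 _ dX)); rewrite inE ?cC ?dC /= ?E eqxx.
Qed.

Definition chord_block (u : (T * T) * (T * T)) : bool :=
  [&& u.1 \in chords e X Y, u.2 \in chords e X Y & block posX posY u].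

Section CrossingBlocks.
Variable L : seq ((T * T) * (T * T)).
Hypotheses (LC : all chord_block L) (pL : pairwise (blocks_cross posX posY) L).

Let blockC u : u \in L ->
  [/\ u.1 \in chords e X Y, u.2 \in chords e X Y & block posX posY u].
Proof. by move=> /(allP LC) /and3P[]. Qed.

Lemma blocks_first_ends :
  exists F : {set T * T},
    [/\ F \subset chords e X Y, #|F| = size L &
        {in F &, forall c1 c2, c1 != c2 -> interlacing X Y c1 c2}].
Proof.
have chain : pairwise (cross posX posY) (map fst L).
  by rewrite pairwise_map; apply: sub_pairwise pL => u v /and4P[].
have uniqA : uniq (map fst L).
  by apply: pairwise_uniq chain => c; rewrite /cross ltnn.
have AC : {subset map fst L <= chords e X Y}.
  by move=> c /mapP[u /blockC[u1 _ _] ->].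
exists [set c in map fst L]; split.
- by apply/subsetP => c; rewrite inE => /AC.
- by rewrite cardsE (card_uniqP uniqA) size_map.
- exact: crossing_chain_interlacing.
Qed.

(* The
   chord c0 only serves as a default value for indexing. *)
Lemma proper_blocks_pairs (c0 : T * T) :
  {in chords e X Y &, injective posX} ->
  exists (t : nat) (ep ep' : nat -> T * T),
    [/\ forall i, i < t ->
          [/\ ep i \in chords e X Y, ep' i \in chords e X Y & ep i != ep' i],
        forall i, i < t ->
          parallel X Y (ep i) (ep' i) || ((ep i).2 == (ep' i).2),
        forall i j, i < j -> j < t ->
          [/\ interlacing X Y (ep i) (ep j), interlacing X Y (ep i) (ep' j),
              interlacing X Y (ep' i) (ep j) & interlacing X Y (ep' i) (ep' j)]
      & \sum_(u <- L | u.1 != u.2) (posX u.2 - posX u.1) <=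
        \sum_(i < t) dX X (ep i).1 (ep' i).1].
Proof.
move=> pinj; set P := [seq u <- L | u.1 != u.2]; pose u i := nth (c0, c0) P i.
have PL i : i < size P -> (u i \in L) && ((u i).1 != (u i).2).
  by move=> iP; have := mem_nth (c0, c0) iP; rewrite mem_filter andbC.
exists (size P), (fun i => (u i).1), (fun i => (u i).2); split.
- by move=> i /PL /andP[/blockC[]].
- move=> i /PL /andP[/blockC[u1 u2 /andP[pu qu]] ne].
  apply: block_parallel => //; rewrite ltn_neqAle pu andbT.
  by apply: contra ne => /eqP /pinj ->.
- move=> i j ij jP; have iP := ltn_trans ij jP.
  have [/andP[/blockC[ui1 ui2 _] _] /andP[/blockC[uj1 uj2 _] _]] := (PL i iP, PL j jP).
  apply: crossing_blocks_interlacing => //.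
  exact: (pairwiseP _ (pairwise_filter _ pL)).
- rewrite -big_filter (big_nth (c0, c0)) big_mkord.
  by apply: leq_sum => i _; exact: leq_addl.
Qed.

End CrossingBlocks.

End Chords.

Unset Implicit Arguments.

Theorem lemma4p3 (T : finType) (e : rel T) (X Y : seq T) :
  simple_graph e ->
  section_pair e X Y ->
  (forall x : T, x \in X -> #|[set c in chords e X Y | c.1 == x]| <= 1) ->
  let m := #|chords e X Y| in
  (exists F : {set T * T},
      [/\ F \subset chords e X Y,
          m <= 2 * #|F| &
          {in F &, forall c1 c2, c1 != c2 -> interlacing X Y c1 c2}])
  \/
  (exists (t : nat) (ep ep' : nat -> T * T),
      [/\ forall i, i < t ->
            [/\ ep i \in chords e X Y, ep' i \in chords e X Y & ep i != ep' i],
          forall i, i < t ->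
            parallel X Y (ep i) (ep' i) || ((ep i).2 == (ep' i).2),
          forall i j, i < j -> j < t ->
            [/\ interlacing X Y (ep i) (ep j), interlacing X Y (ep i) (ep' j),
                interlacing X Y (ep' i) (ep j) & interlacing X Y (ep' i) (ep' j)]
        & m <= 4 * \sum_(i < t) dX X (ep i).1 (ep' i).1]).
Proof.
move=> _ [_ _ disXY] atmost1 m.
have pinj := posX_inj atmost1.
have [L [LC pL]] := block_decomposition (posY Y) pinj.
rewrite blocks_count -/m => cardC.
case: (leqP m (2 * size L)) => [smallm | bigm]; [left | right].
  have [F [FC cardF interF]] := blocks_first_ends disXY LC pL.
  by exists F; rewrite cardF.
have [c0 _] : exists c0, c0 \in chords e X Y by apply/card_gt0P; rewrite -/m; lia.
have [t [ep [ep' [pairsC pairsP pairsI sumle]]]] :=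
  proper_blocks_pairs disXY LC pL c0 pinj.
exists t, ep, ep'; split => //.
have := leq_trans cardC (leq_add (leqnn (size L)) sumle).
(* m <= |L| + s and 2|L| < m give m < 2s. *)
lia.
Qed.
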